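(* Let $n$ be a positive even integer, let $g(t)=t^{n-1}$, and let $f(t)=\sum_{j=0}^d a_j t^j$ be a real polynomial, written as $f(t)=p(t^2)+t\,q(t^2)$ with $p,q$ real polynomials, such that the function $t\mapsto p(t^2)$ changes sign at most two times in $[-1,1]$. Consider the Abel equation $$x'(t)=f(t)x^3+g(t)x^2,\qquad t\in[-1,1].$$ If this equation has a center at $x=0$, then $$m_k=\int_{-1}^1 f(t)\,(G(t))^k\,dt=0\qquad\text{for all } k=0,1,2,3,4,\ldots,$$ where $G(t)=\int_{-1}^t g(s)\,ds=\frac{1}{n}(t^n-1)$.
   Context: The Abel equation $x'=f(t)x^3+g(t)x^2$ on $[-1,1]$ (with $x$ real) is said to have a center at $x=0$ if every solution $x(t)$ whose initial value $x(-1)$ is small enough in absolute value is defined on $[-1,1]$ and satisfies $x(-1)=x(1)$. *)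

From HB Require Import structures.
From mathcomp Require Import all_boot all_order all_algebra.
From mathcomp Require Import all_classical all_reals all_analysis.
Set Implicit Arguments. Unset Strict Implicit. Unset Printing Implicit Defensive.
Import Order.TTheory GRing.Theory Num.Theory.
Import numFieldNormedType.Exports.
Local Open Scope classical_set_scope.
Local Open Scope ring_scope.

(* x is a solution of x' = f(t) x^3 + g(t) x^2 on [-1,1]:
   continuous on [-1,1] and satisfying the ODE at every interior point
   (the RHS being continuous, this gives one-sided derivatives at the ends). *)
Definition abel_solution {R : realType} (f g : R -> R) (x : R -> R) : Prop :=
  {within [set` `[-1, 1]], continuous x} /\
  (forall t : R, -1 < t < 1 ->
     is_derive t 1 x (f t * x t ^+ 3 + g t * x t ^+ 2)).

Definition abel_center {R : realType} (f g : R -> R) : Prop :=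
  exists2 delta : R, 0 < delta &
    forall x0 : R, `|x0| < delta ->
      (exists x : R -> R, abel_solution f g x /\ x (-1) = x0) /\
      (forall x : R -> R, abel_solution f g x -> x (-1) = x0 -> x 1 = x0).

Definition at_most_two_sign_changes {R : realType} (h : R -> R) : Prop :=
  ~ exists t0 t1 t2 t3 : R,
      [/\ -1 <= t0, t0 < t1, t1 < t2, t2 < t3 & t3 <= 1] /\
      [/\ h t0 * h t1 < 0, h t1 * h t2 < 0 & h t2 * h t3 < 0].

From HB Require Import structures.
From mathcomp Require Import all_boot all_order all_algebra.
From mathcomp Require Import all_classical all_reals all_analysis.
From mathcomp Require Import ring lra.
Import Order.TTheory GRing.Theory Num.Theory.
Import numFieldNormedType.Exports.
Local Open Scope classical_set_scope.
Local Open Scope ring_scope.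

(* Write f(t) = P(t) + t q(t^2) with P(t) = p(t^2); g(t) = t^(n-1) is odd.
   Along a positive solution x, D(t) = (x(-t)^-2 - x(t)^-2) / 4 solves the
   linear equation D' = P - b D on [0,1], with b = 2 g / (1/x(t) + 1/x(-t)),
   so for an integrating factor W (W' = b W) the function W D is a primitive
   of P W.  It vanishes at 0, and at 1 because x(1) = x(-1): the weighted
   moment of P against W vanishes.  Two ordered solutions x < y give b_x < b_y,
   hence W_y / W_x is strictly increasing.  If P changes sign only at ts in
   (0,1], then P (W_y - (W_y / W_x)(ts) W_x) has constant sign, and its
   vanishing moment forces P = 0 away from ts; so p = 0.  Then f is odd and
   G(t) = (t^n - 1)/n is even, and every moment is the integral of an odd
   function over [-1,1]. *)

Section within_continuity.
Context {R : realType}.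
Implicit Types (A : set R) (f g : R -> R).

Lemma within_continuousD A f g : {within A, continuous f} ->
  {within A, continuous g} -> {within A, continuous (fun t => f t + g t)}.
Proof. by move=> hf hg x; apply: continuousD; [exact: hf|exact: hg]. Qed.

Lemma within_continuousB A f g : {within A, continuous f} ->
  {within A, continuous g} -> {within A, continuous (fun t => f t - g t)}.
Proof. by move=> hf hg x; apply: continuousB; [exact: hf|exact: hg]. Qed.

Lemma within_continuousM A f g : {within A, continuous f} ->
  {within A, continuous g} -> {within A, continuous (fun t => f t * g t)}.
Proof. by move=> hf hg x; apply: continuousM; [exact: hf|exact: hg]. Qed.

Lemma within_continuousV A f : {within A, continuous f} ->
  (forall t, A t -> f t != 0) -> {within A, continuous (fun t => (f t)^-1)}.
Proof.
move=> hf hf0; rewrite continuous_subspace_in => x; rewrite inE => xA.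
by apply: continuousV; [exact: hf0|exact: hf].
Qed.

Lemma within_continuousX A f m : {within A, continuous f} ->
  {within A, continuous (fun t => f t ^+ m)}.
Proof.
move=> hf; elim: m => [|m ih]; first by move=> x; exact: cst_continuous.
under eq_fun do rewrite exprS.
exact: within_continuousM.
Qed.

Lemma within_continuous_compN f a b : {within `[-b, -a], continuous f} ->
  {within `[a, b], continuous (fun t => f (- t))}.
Proof.
move/subspace_continuousP => hf; apply/subspace_continuousP => t tab.
have Nt : [set` `[-b, -a]] (- t) by move: tab; rewrite /= !in_itv /= !lerN2 andbC.
have N_cvg : -%R @ within `[a, b] (nbhs t) --> within `[-b, -a] (nbhs (- t)).
  move=> U /=; rewrite !nbhs_filterE /within /= => hU.
  have : \forall s \near t, - s \in `[-b, -a] -> U (- s).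
    have cN : -%R @ nbhs t --> nbhs (- t) by apply: continuousN; exact: cvg_id.
    exact: cN hU.
  apply: filterS => s /= hs sab; apply: hs.
  by move: sab; rewrite /= !in_itv /= !lerN2 andbC.
exact: cvg_comp N_cvg (hf _ Nt).
Qed.

End within_continuity.

Section real_derivatives.
Context {R : realType}.
Implicit Types (f g : R -> R) (t df dg : R).

(* Pointwise forms of the library rules, which unify with lambda-terms. *)
Lemma is_deriveMr {f g t df dg} : is_derive t 1 f df -> is_derive t 1 g dg ->
  is_derive t 1 (fun s => f s * g s) (f t * dg + g t * df).
Proof. exact: is_deriveM. Qed.

Lemma is_deriveBr {f g t df dg} : is_derive t 1 f df -> is_derive t 1 g dg ->
  is_derive t 1 (fun s => f s - g s) (df - dg).
Proof. exact: is_deriveB. Qed.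

Lemma is_deriveXr {f t df} m : is_derive t 1 f df ->
  is_derive t 1 (fun s => f s ^+ m) (m%:R * f t ^+ m.-1 * df).
Proof. by move/(is_deriveX m); rewrite exprfctE. Qed.

Lemma is_derive_compNr {f t df} : is_derive (- t) 1 f df ->
  is_derive t 1 (fun s => f (- s)) (- df).
Proof. by move/is_derive1_comp/(_ (is_deriveNid t 1)); rewrite mulrN1. Qed.

Section on_interval.
Variables (a b : R) (h dh : R -> R).
Hypothesis hd : forall t, a < t < b -> is_derive t 1 h (dh t).
Hypothesis hc : {within `[a, b], continuous h}.

Lemma is_derive_ge0_le : (forall t, a < t < b -> 0 <= dh t) ->
  {in `[a, b] &, {homo h : s t / s <= t}}.
Proof.
move=> dh_ge0; apply: ger0_derive1_le_cc => // t; rewrite in_itv /= => tab.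
  by case: (hd _ tab).
by rewrite derive1E; case: (hd _ tab) => _ ->; exact: dh_ge0.
Qed.

Lemma is_derive_gt0_lt : (forall t, a < t < b -> 0 < dh t) ->
  {in `[a, b] &, {homo h : s t / s < t}}.
Proof.
move=> dh_gt0; apply: gtr0_derive1_lt_cc => // t; rewrite in_itv /= => tab.
  by case: (hd _ tab).
by rewrite derive1E; case: (hd _ tab) => _ ->; exact: dh_gt0.
Qed.

Lemma is_derive_ge0_eq0 : h a = h b -> (forall t, a < t < b -> 0 <= dh t) ->
  forall t, a < t < b -> dh t = 0.
Proof.
move=> hab dh_ge0 t tab; have ab : a <= b by case/andP: tab => *; lra.
have hcst s : a <= s <= b -> h s = h a.
  move=> /andP[a_s s_b]; apply/eqP; rewrite eq_le; apply/andP; split.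
    by rewrite hab; apply: is_derive_ge0_le; rewrite ?in_itv /= ?a_s ?s_b ?lexx ?ab.
  by apply: is_derive_ge0_le; rewrite ?in_itv /= ?a_s ?s_b ?lexx ?ab.
have near_cst : \forall s \near t, h s = cst (h a) s.
  have := @near_in_itvoo R a b t; rewrite in_itv /= tab => /(_ isT).
  by apply: filterS => s; rewrite in_itv /= => /andP[? ?]; apply: hcst; lra.
have := near_eq_is_derive near_cst (hd _ tab).
by move/(@derive_val _ _ _ _ _ _ _) => <-; rewrite derive_cst.
Qed.

End on_interval.

Lemma exists_integrating_factor {a b} {k : R -> R} :
  a < b -> {within `[a, b], continuous k} ->
  exists W : R -> R, [/\ {within `[a, b], continuous W}, (forall t, 0 < W t) &
    forall t, a < t < b -> is_derive t 1 W (k t * W t)].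
Proof.
move=> ab hk.
pose K x := parameterized_integral (@lebesgue_measure R) a x k.
have ik : (@lebesgue_measure R).-integrable `[a, b] (EFin \o k).
  by apply: continuous_compact_integrable => //; exact: segment_compact.
exists (expR \o K); split => [x||t /andP[a_t t_b]].
- have Kx := @parameterized_integral_continuous R a b k (ltW ab) ik x.
  exact: continuous_comp Kx (@continuous_expR R (K x)).
- by move=> t; exact: expR_gt0.
have kt : {for t, continuous k}.
  by have [+ _ _] := (continuous_within_itvP _ ab).1 hk; apply; rewrite in_itv /= a_t t_b.
have [dK K'] := continuous_FTC1_closed t_b ik a_t kt.
rewrite mulrC; apply: is_derive1_comp.
by rewrite -K' derive1E; exact: derivableP.
Qed.

Lemma linear_ode_gt0 a b (x k : R -> R) : a < b ->
  {within `[a, b], continuous x} -> {within `[a, b], continuous k} ->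
  (forall t, a < t < b -> is_derive t 1 x (k t * x t)) ->
  0 < x a -> forall t, a <= t <= b -> 0 < x t.
Proof.
move=> ab hx hk hd xa t tab.
have [W [Wc W_gt0 Wd]] := exists_integrating_factor ab hk.
have W0 s : W s != 0 by exact: lt0r_neq0.
pose h s := x s * (W s)^-1.
have hd0 s : a < s < b -> is_derive s 1 h 0.
  move=> sab; have := is_deriveMr (hd s sab) (is_deriveV (W0 s) (Wd s sab)).
  by move/is_derive_eq; apply; rewrite -![_ *: _]/(_ * _); field.
have hc : {within `[a, b], continuous h}.
  by apply: within_continuousM => //; apply: within_continuousV.
have : h a <= h t.
  have [a_t t_b] := andP tab.
  apply: (is_derive_ge0_le _ _ _ (fun=> 0) hd0 hc);
    by rewrite ?in_itv /= ?lexx ?a_t ?t_b ?(ltW ab).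
have : 0 < h a by rewrite divr_gt0.
rewrite /h => /lt_le_trans/[apply].
by rewrite pmulr_lgt0 // invr_gt0.
Qed.

Lemma ratio_lt {a b} {Wa Wb ka kb : R -> R} :
  {within `[a, b], continuous Wa} -> {within `[a, b], continuous Wb} ->
  (forall t, 0 < Wa t) -> (forall t, 0 < Wb t) ->
  (forall t, a < t < b -> is_derive t 1 Wa (ka t * Wa t)) ->
  (forall t, a < t < b -> is_derive t 1 Wb (kb t * Wb t)) ->
  (forall t, a < t < b -> ka t < kb t) ->
  {in `[a, b] &, {homo (fun t => Wb t / Wa t) : s t / s < t}}.
Proof.
move=> Wac Wbc Wa_gt0 Wb_gt0 Wad Wbd kab.
have Wa0 t : Wa t != 0 by exact: lt0r_neq0.
apply: (is_derive_gt0_lt _ _ _ (fun t => (kb t - ka t) * (Wb t / Wa t))).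
- move=> t tab; have := is_deriveMr (Wbd t tab) (is_deriveV (Wa0 t) (Wad t tab)).
  by move/is_derive_eq; apply; rewrite -![_ *: _]/(_ * _); field.
- by apply: within_continuousM => //; apply: within_continuousV.
- by move=> t tab; rewrite mulr_gt0 ?subr_gt0 ?kab ?divr_gt0.
Qed.

Lemma two_weights_sign_change_eq0 {a b} {P Wa Wb ua ub : R -> R} {ts sg : R} :
  sg != 0 -> a <= ts <= b -> (forall t, a < t < b -> 0 <= sg * (t - ts) * P t) ->
  (forall t, 0 < Wa t) ->
  {in `[a, b] &, {homo (fun t => Wb t / Wa t) : s t / s < t}} ->
  {within `[a, b], continuous ua} -> {within `[a, b], continuous ub} ->
  (forall t, a < t < b -> is_derive t 1 ua (P t * Wa t)) ->
  (forall t, a < t < b -> is_derive t 1 ub (P t * Wb t)) ->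
  ua a = ua b -> ub a = ub b ->
  forall t, a < t < b -> t != ts -> P t = 0.
Proof.
move=> sg0 ts_ab P_sign Wa_gt0 r_lt uac ubc uad ubd ua_ab ub_ab.
pose r t := Wb t / Wa t.
have in_ab t : a < t < b -> t \in `[a, b].
  by rewrite in_itv /= => /andP[? ?]; apply/andP; split; lra.
have ts_in : ts \in `[a, b] by rewrite in_itv.
pose V t := sg * (ub t - r ts * ua t).
have Vd t : a < t < b -> is_derive t 1 V (sg * P t * (r t - r ts) * Wa t).
  move=> tab; have := is_deriveMr (is_derive_cst sg t 1)
    (is_deriveBr (ubd t tab) (is_deriveMr (is_derive_cst (r ts) t 1) (uad t tab))).
  by move/is_derive_eq; apply; rewrite /r /=; field; rewrite !lt0r_neq0.
have Vc : {within `[a, b], continuous V}.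
  apply: within_continuousM; first by move=> ?; exact: cst_continuous.
  apply: within_continuousB => //; apply: within_continuousM => //.
  by move=> ?; exact: cst_continuous.
have dV_ge0 t : a < t < b -> 0 <= sg * P t * (r t - r ts) * Wa t.
  move=> tab; rewrite mulr_ge0 ?(ltW (Wa_gt0 t)) //.
  have : 0 <= (t - ts) * (sg * P t) by have := P_sign t tab; nra.
  have [t_ts|ts_t|->] := ltgtP t ts; last by rewrite !subrr mulr0.
  - rewrite nmulr_rge0 ?subr_lt0 // => sgP_le0.
    by rewrite mulr_le0 // subr_le0 ltW // (r_lt _ _ (in_ab _ tab) ts_in t_ts).
  - rewrite pmulr_rge0 ?subr_gt0 // => sgP_ge0.
    by rewrite mulr_ge0 // subr_ge0 ltW // (r_lt _ _ ts_in (in_ab _ tab) ts_t).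
have V_ab : V a = V b by rewrite /V ua_ab ub_ab.
move=> t tab t_ts.
have r_neq : r t != r ts.
  move: t_ts; have [t_ts|ts_t|//] := ltgtP t ts => _.
  - by apply/negbT/lt_eqF; exact: (r_lt _ _ (in_ab _ tab) ts_in t_ts).
  - by apply/negbT/gt_eqF; exact: (r_lt _ _ ts_in (in_ab _ tab) ts_t).
have /eqP := is_derive_ge0_eq0 _ _ _ _ Vd Vc V_ab dV_ge0 t tab.
rewrite !mulf_eq0 (negbTE sg0) (gt_eqF (Wa_gt0 t)) subr_eq0 (negbTE r_neq).
by rewrite !orbF => /eqP.
Qed.

End real_derivatives.

Section sign_changes.
Context {R : realType}.
Implicit Types (h : R -> R) (a b : R).

Definition at_most_one_sign_change h a b : Prop :=
  ~ exists t1 t2 t3 : R,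
      [/\ a < t1, t1 < t2, t2 < t3 & t3 <= b] /\ h t1 * h t2 < 0 /\ h t2 * h t3 < 0.

Definition pos_before_neg h a b : Prop :=
  forall d e, a < d <= b -> a < e <= b -> 0 < h e -> h d < 0 -> e < d.

Lemma even_at_most_one_sign_change h : (forall t, h (- t) = h t) ->
  at_most_two_sign_changes h -> at_most_one_sign_change h 0 1.
Proof.
move=> h_even h2 [t1 [t2 [t3 [[t1_gt0 t12 t23 t3_le1] [h12 h23]]]]].
apply: h2; exists (- t2), t1, t2, t3; split; first by split => //; lra.
by rewrite h_even mulrC.
Qed.

Lemma one_sign_change_pos_before_neg h a b : at_most_one_sign_change h a b ->
  pos_before_neg h a b \/ pos_before_neg (fun t => - h t) a b.
Proof.
move=> h1; have [|hK] := pselect (pos_before_neg h a b); [by left|right].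
move=> d e /andP[ad db] /andP[ae eb]; rewrite oppr_gt0 oppr_lt0 => he hd.
rewrite ltNge; apply/negP => d_le_e.
apply: hK => d' e' /andP[ad' d'b] /andP[ae' e'b] he' hd'.
rewrite ltNge; apply/negP => d'_le_e'.
have de : d < e.
  by rewrite lt_neqAle d_le_e andbT; apply: contraTneq hd => ->; rewrite -leNgt ltW.
have d'e' : d' < e'.
  by rewrite lt_neqAle d'_le_e' andbT; apply: contraTneq hd' => ->; rewrite -leNgt ltW.
have [e_e'|e'_e|eq_e] := ltgtP e e'.
- apply: h1; exists d, e, e'; split; first by split => //; lra.
  by split; nra.
- apply: h1; exists d', e', e; split; first by split => //; lra.
  by split; nra.
- by move: he'; rewrite -eq_e ltNge ltW.
Qed.

Lemma pos_before_neg_sign {h a b} : a <= b -> pos_before_neg h a b ->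
  exists2 ts, a <= ts <= b & forall t, a < t <= b -> 0 <= (ts - t) * h t.
Proof.
move=> ab hK; pose S := [set t | a < t <= b /\ 0 < h t].
have [[e Se]|S0] := pselect (exists e, S e); last first.
  exists a => [|t tab]; first by rewrite lexx ab.
  rewrite nmulr_rge0 ?subr_lt0; last by case/andP: tab.
  by rewrite leNgt; apply: contra_notN S0 => ht; exists t.
have S_ub : has_ubound S by exists b => t [/andP[_ ?] _].
have [/andP[ae eb] he] := Se.
exists (sup S) => [|t tab].
  apply/andP; split; first by apply: le_trans (ltW ae) _; exact: ub_le_sup.
  by apply: ge_sup; [exists e | move=> t [/andP[_ ?] _]].
have [ht|ht|->] := ltgtP (h t) 0; last by rewrite mulr0.
- rewrite nmulr_lge0 // subr_le0; apply: ge_sup; first by exists e.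
  by move=> e' [e'ab he']; apply/ltW/hK.
- by rewrite pmulr_lge0 // subr_ge0; exact: ub_le_sup.
Qed.

Lemma one_sign_change_sign {h a b} : a <= b -> at_most_one_sign_change h a b ->
  exists ts sg : R, [/\ sg != 0, a <= ts <= b &
    forall t, a < t <= b -> 0 <= sg * (t - ts) * h t].
Proof.
move=> ab /one_sign_change_pos_before_neg [hK|hK].
- have [ts tsab hts] := pos_before_neg_sign ab hK.
  exists ts, (-1); split => // t /hts; rewrite -opprB; lra.
- have [ts tsab hts] := pos_before_neg_sign ab hK.
  exists ts, 1; split => // t /hts; rewrite -opprB; lra.
Qed.

End sign_changes.

Section polynomial_roots.
Context {R : realType}.

Lemma poly_eq0_of_roots_itv (p : {poly R}) a b : a < b ->
  (forall s, a < s < b -> p.[s] = 0) -> p = 0.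
Proof.
move=> ab hp; apply/eqP; apply: contraT => p_neq0.
have ba_gt0 : 0 < b - a by rewrite subr_gt0.
pose rs := [seq a + (b - a) / (i.+2)%:R | i <- iota 0 (size p)].
suff : (size rs < size p)%N by rewrite size_map size_iota ltnn.
apply: max_poly_roots p_neq0 _ _.
- apply/allP => s /mapP [i _ ->]; apply/eqP/hp.
  have i_gt0 : (0 : R) < (i.+2)%:R by rewrite ltr0n.
  rewrite ltrDl divr_gt0 //= -ltrBrDl ltr_pdivrMr // ltr_pMr //.
  by rewrite ltr1n.
- rewrite map_inj_uniq ?iota_uniq // => i j /addrI /(mulrI (unitf_gt0 ba_gt0)).
  by move/invr_inj/eqP; rewrite eqr_nat => /eqP [].
Qed.

Lemma poly_eq0_of_roots_itvD1 (p : {poly R}) a b c : a < b ->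
  (forall s, a < s < b -> s != c -> p.[s] = 0) -> p = 0.
Proof.
move=> ab hp; pose m := (a + b) / 2.
have [am mb] : a < m /\ m < b by rewrite /m; split; lra.
have [cm|mc] := lerP c m.
- apply: (@poly_eq0_of_roots_itv p m b) => // s /andP[ms sb].
  by apply: hp; [apply/andP; split | apply/negbT/gt_eqF]; lra.
- apply: (@poly_eq0_of_roots_itv p a m) => // s /andP[a_s sm].
  by apply: hp; [apply/andP; split | apply/negbT/lt_eqF]; lra.
Qed.

End polynomial_roots.

Lemma integral_odd_eq0 {R : realType} (F : R -> R) (a : R) : 0 <= a ->
  continuous F -> (forall t, F (- t) = - F t) ->
  (\int[@lebesgue_measure R]_(t in [set` `[(- a)%R, a%R]]) (F t)%:E = 0)%E.
Proof.
move=> a_ge0 cF F_odd.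
have Na_le_a : - a <= a by lra.
have cF' : {within `[- a, a], continuous F} by exact: continuous_subspaceT.
have iF : (@lebesgue_measure R).-integrable `[- a, a] (EFin \o F).
  by apply: continuous_compact_integrable => //; exact: segment_compact.
have := integration_by_substitution_oppr Na_le_a; rewrite opprK => /(_ F cF').
have -> : (\int[@lebesgue_measure R]_(x in `[(- a)%R, a]) ((F \o -%R) x)%:E =
    \int[@lebesgue_measure R]_(x in `[(- a)%R, a]) - (F x)%:E)%E.
  by apply: eq_integral => x _; rewrite /= F_odd.
rewrite integralN; last by rewrite fin_num_adde_defl // fin_numN integrable_neg_fin_num.
case: (\int[_]_(x in _) _)%E => [r||] //=.
by move=> /eqP; rewrite eqe -subr_eq0 opprK -mulr2n mulrn_eq0 /= => /eqP ->.
Qed.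

Section abel_solutions.
Context {R : realType}.
Implicit Types t : R.
Variables f g : R -> R.
Hypotheses (f_cont : continuous f) (g_cont : continuous g).

Let f_cont_itv : {within `[-1, 1], continuous f}.
Proof. exact: continuous_subspaceT. Qed.

Let g_cont_itv : {within `[-1, 1], continuous g}.
Proof. exact: continuous_subspaceT. Qed.

Lemma abel_solution_gt0 x : abel_solution f g x -> 0 < x (-1) ->
  forall t, -1 <= t <= 1 -> 0 < x t.
Proof.
move=> [xc xd] x0.
apply: (@linear_ode_gt0 R (-1) 1 x (fun t => f t * x t ^+ 2 + g t * x t)) => //.
- by apply: within_continuousD; apply: within_continuousM;
    [exact: f_cont_itv | exact: within_continuousX | exact: g_cont_itv | exact: xc].
- by move=> t /xd /is_derive_eq; apply; ring.
Qed.

Lemma abel_solution_lt x y : abel_solution f g x -> abel_solution f g y ->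
  x (-1) < y (-1) -> forall t, -1 <= t <= 1 -> x t < y t.
Proof.
move=> [xc xd] [yc yd] xy t tI; rewrite -subr_gt0; move: t tI.
apply: (@linear_ode_gt0 R (-1) 1 (fun t => y t - x t)
   (fun t => f t * (y t ^+ 2 + y t * x t + x t ^+ 2) + g t * (y t + x t))) => //.
- exact: within_continuousB.
- apply: within_continuousD; apply: within_continuousM;
    [exact: f_cont_itv | | exact: g_cont_itv | exact: within_continuousD].
  by apply: within_continuousD; [apply: within_continuousD|];
    [exact: within_continuousX | exact: within_continuousM | exact: within_continuousX].
- by move=> t tI; apply: is_derive_eq (is_deriveBr (yd t tI) (xd t tI)) _; ring.
- by rewrite subr_gt0.
Qed.

Lemma abel_center_solutions : abel_center f g ->
  exists x y, [/\ abel_solution f g x, abel_solution f g y,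
    0 < x (-1) < y (-1), x 1 = x (-1) & y 1 = y (-1)].
Proof.
case=> del del_gt0 center.
have [[x [xs x0]] x_per] := center (del / 3) ltac:(rewrite gtr0_norm; lra).
have [[y [ys y0]] y_per] := center (del / 2) ltac:(rewrite gtr0_norm; lra).
exists x, y; split => //; first by rewrite x0 y0; apply/andP; split; lra.
  by rewrite x0; exact: x_per.
by rewrite y0; exact: y_per.
Qed.

Section symmetric_part.
Variable P : R -> R.
Hypothesis f_reflect : forall t, f (- t) = 2 * P t - f t.
Hypothesis g_odd : forall t, g (- t) = - g t.
Hypothesis g_gt0 : forall t, 0 < t < 1 -> 0 < g t.

Definition abel_weight (x : R -> R) (t : R) : R := 2 * g t / ((x t)^-1 + (x (- t))^-1).

Definition abel_defect (x : R -> R) (t : R) : R :=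
  ((x (- t) ^+ 2)^-1 - (x t ^+ 2)^-1) / 4.

Section positive_solution.
Variable x : R -> R.
Hypothesis x_sol : abel_solution f g x.
Hypothesis x_gt0 : forall t, -1 <= t <= 1 -> 0 < x t.

Let x_gt0_01 t : 0 <= t <= 1 -> 0 < x t /\ 0 < x (- t).
Proof. by move=> t01; split; apply: x_gt0; lra. Qed.

Let x_cont_01 :
  {within `[0, 1], continuous x} /\ {within `[0, 1], continuous (fun t => x (- t))}.
Proof.
have [xc _] := x_sol; split.
  by apply: continuous_subspaceW xc => s; rewrite /= !in_itv /=; lra.
apply: within_continuous_compN; apply: continuous_subspaceW xc => s.
by rewrite /= !in_itv /=; lra.
Qed.

Lemma abel_weight_continuous : {within `[0, 1], continuous (abel_weight x)}.
Proof.
have [xc yc] := x_cont_01.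
have x_neq0 t : [set` `[0, 1]] t -> x t != 0 /\ x (- t) != 0.
  by rewrite /= in_itv /= => /x_gt0_01 [? ?]; split; exact: lt0r_neq0.
apply: within_continuousM.
  apply: within_continuousM; last exact: continuous_subspaceT.
  by move=> ?; exact: cst_continuous.
apply: within_continuousV.
  by apply: within_continuousD; apply: within_continuousV => // t /x_neq0 [].
move=> t; rewrite /= in_itv /= => /x_gt0_01 [? ?].
by rewrite lt0r_neq0 // addr_gt0 // invr_gt0.
Qed.

Lemma abel_defect_continuous : {within `[0, 1], continuous (abel_defect x)}.
Proof.
have [xc yc] := x_cont_01.
apply: within_continuousM; last by move=> t; exact: cst_continuous.
apply: within_continuousB; apply: within_continuousV; try exact: within_continuousX.
  by move=> t; rewrite /= in_itv /= => /x_gt0_01 [? ?]; rewrite expf_neq0 // lt0r_neq0.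
by move=> t; rewrite /= in_itv /= => /x_gt0_01 [? ?]; rewrite expf_neq0 // lt0r_neq0.
Qed.

Lemma abel_defect_derive t : 0 < t < 1 ->
  is_derive t 1 (abel_defect x) (P t - abel_weight x t * abel_defect x t).
Proof.
move=> t01; have [_ xd] := x_sol.
have [xt_gt0 yt_gt0] : 0 < x t /\ 0 < x (- t) by apply: x_gt0_01; lra.
have xt := lt0r_neq0 xt_gt0; have yt := lt0r_neq0 yt_gt0.
have dx : is_derive t 1 x (f t * x t ^+ 3 + g t * x t ^+ 2) by apply: xd; lra.
have dy := is_derive_compNr (xd (- t) ltac:(lra)).
have dX := is_deriveV (f := fun s => x s ^+ 2) (expf_neq0 2 xt) (is_deriveXr 2 dx).
have dY := is_deriveV (f := fun s => x (- s) ^+ 2) (expf_neq0 2 yt) (is_deriveXr 2 dy).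
have dD := is_deriveMr (is_deriveBr dY dX) (is_derive_cst (4^-1 : R) t 1).
apply: is_derive_eq dD _.
rewrite /abel_weight /abel_defect f_reflect g_odd /= -![_ *: _]/(_ * _).
by field; rewrite xt yt lt0r_neq0 // addr_gt0.
Qed.

Lemma abel_first_integral : exists W : R -> R,
  [/\ {within `[0, 1], continuous W}, (forall t, 0 < W t),
    (forall t, 0 < t < 1 -> is_derive t 1 W (abel_weight x t * W t)),
    {within `[0, 1], continuous (fun t => W t * abel_defect x t)} &
    forall t, 0 < t < 1 -> is_derive t 1 (fun t => W t * abel_defect x t) (P t * W t)].
Proof.
have [W [Wc W_gt0 Wd]] := exists_integrating_factor ltr01 abel_weight_continuous.
exists W; split => // [|t t01].
  exact: within_continuousM Wc abel_defect_continuous.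
have := is_deriveMr (Wd t t01) (abel_defect_derive _ t01).
by move/is_derive_eq; apply; ring.
Qed.

End positive_solution.

Lemma abel_weight_lt x y : abel_solution f g x -> abel_solution f g y ->
  (forall t, -1 <= t <= 1 -> 0 < x t < y t) ->
  forall t, 0 < t < 1 -> abel_weight x t < abel_weight y t.
Proof.
move=> xs ys xy t t01.
have /andP[xt xyt] : 0 < x t < y t by apply: xy; lra.
have /andP[yt xyy] : 0 < x (- t) < y (- t) by apply: xy; lra.
rewrite /abel_weight ltr_pM2l ?mulr_gt0 ?g_gt0 //.
rewrite ltf_pV2 ?posrE ?addr_gt0 ?invr_gt0 //; try lra.
by rewrite ltrD // ltf_pV2 ?posrE //; lra.
Qed.

Lemma abel_center_even_part_eq0 :
  abel_center f g -> at_most_one_sign_change P 0 1 ->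
  exists ts, forall t, 0 < t < 1 -> t != ts -> P t = 0.
Proof.
move=> /abel_center_solutions [x [y [xs ys /andP[x0 xy0] x_per y_per]]] P_one.
have x_gt0 := abel_solution_gt0 _ xs x0.
have y_gt0 := abel_solution_gt0 _ ys (lt_trans x0 xy0).
have xy t : -1 <= t <= 1 -> 0 < x t < y t.
  by move=> tI; rewrite x_gt0 // abel_solution_lt.
have [Wx [Wxc Wx_gt0 Wxd ux_c ux_d]] := abel_first_integral _ xs x_gt0.
have [Wy [Wyc Wy_gt0 Wyd uy_c uy_d]] := abel_first_integral _ ys y_gt0.
have [ts [sg [sg0 ts01 P_sign]]] := one_sign_change_sign ler01 P_one.
have u_ends z W : z 1 = z (-1) -> W 0 * abel_defect z 0 = W 1 * abel_defect z 1.
  by move=> z_per; rewrite /abel_defect oppr0 z_per !subrr !mul0r !mulr0.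
exists ts; apply: (two_weights_sign_change_eq0 sg0 ts01 _ Wx_gt0 _ ux_c uy_c ux_d uy_d).
- by move=> t /andP[t0 t1]; apply: P_sign; rewrite t0 ltW.
- apply: ratio_lt Wxc Wyc Wx_gt0 Wy_gt0 Wxd Wyd _.
  exact: abel_weight_lt xs ys xy.
- exact: u_ends.
- exact: u_ends.
Qed.

End symmetric_part.
End abel_solutions.

Theorem theorem2 (R : realType) (n : nat) (f p q : {poly R}) :
  (0 < n)%N -> ~~ odd n ->
  f = p \Po 'X^2 + 'X * (q \Po 'X^2) ->
  at_most_two_sign_changes (fun t : R => p.[t ^+ 2]) ->
  abel_center (fun t : R => f.[t]) (fun t : R => t ^+ n.-1) ->
  forall k : nat,
    (\int[@lebesgue_measure R]_(t in [set` `[(-1)%R, 1%R]])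
        (f.[t] * ((t ^+ n - 1) / n%:R) ^+ k)%:E = 0)%E.
Proof.
move=> n_gt0 n_even f_split P_two center k.
have n1_odd : odd n.-1 by move: n_gt0 n_even; case: (n) => //= m _; rewrite negbK.
have fE t : f.[t] = p.[t ^+ 2] + t * q.[t ^+ 2].
  by rewrite f_split hornerD hornerM hornerX !horner_comp hornerXn.
have f_reflect t : f.[- t] = 2 * p.[t ^+ 2] - f.[t] by rewrite !fE sqrrN; ring.
have g_odd (t : R) : (- t) ^+ n.-1 = - t ^+ n.-1 by rewrite exprNn -signr_odd n1_odd mulN1r.
have g_gt0 (t : R) : 0 < t < 1 -> 0 < t ^+ n.-1 by case/andP => t0 _; exact: exprn_gt0.
have P_even (t : R) : p.[(- t) ^+ 2] = p.[t ^+ 2] by rewrite sqrrN.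
have [ts P0] := abel_center_even_part_eq0 _ _ (@continuous_horner _ f)
  (@exprn_continuous _ _) _ f_reflect g_odd g_gt0 center
  (even_at_most_one_sign_change _ P_even P_two).
have P_t t : p.[t ^+ 2] = 0.
  have p0 : p \Po 'X^2 = 0.
    apply: (poly_eq0_of_roots_itvD1 _ 0 1 ts ltr01) => s s01 s_ts.
    by rewrite horner_comp hornerXn; exact: P0.
  by move: (congr1 (horner^~ t) p0); rewrite horner_comp hornerXn horner0.
apply: integral_odd_eq0 ler01 _ _ => [|t].
  have -> : (fun t => f.[t] * ((t ^+ n - 1) / n%:R) ^+ k) =
      horner (f * (('X^n - 1) * (n%:R^-1)%:P) ^+ k).
    by apply: funext => t; rewrite !hornerE.
  exact: continuous_horner.
rewrite f_reflect P_t exprNn -signr_odd (negbTE n_even) expr0 mul1r.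
by rewrite mulr0 sub0r mulNr.
Qed.
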